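(* In any algorithm solving the Knot Identification Problem on a computation $\sigma$, every knot output by any process is globally observable in $\sigma$.
   Context: A network consists of finitely many processes with unique identifiers. A state is a set of directed links between processes; a computation $\sigma=s_1,s_2,\dots$ is an infinite sequence of states. Causal precedence among events (local steps of processes and occurrences of links in states) is the smallest transitive relation such that $e_1$ precedes $e_2$ if both occur at the same process with $e_1$ earlier, or if there is a link from $p_1$ to $p_2$ with $e_1$ at $p_1$ before the link and $e_2$ at $p_2$ after it. The local observation graph $LG(p,\sigma,i)$ is the graph of all links (with their endpoints) that causally precede the events at $p$ in state $s_i$. A knot of a directed graph is a set of at least two processes inducing a strongly connected subgraph with no incoming links from outside the set. Process $p$ observes knot $K$ in $\sigma$ if $K$ is a knot contained in $LG(p,\sigma,i)$ for some state $s_i$; $K$ is globally observable in $\sigma$ if every process observes it. Standing convention: a process may output only a knot that it has observed. Knot Identification Problem: each process outputs a set of processes $K$ forming a knot in the computation, such that (KI Agreement) if one process outputs $K$ then every process's output is $K$, and (KI Termination) every process outputs a knot. *)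

From mathcomp Require Import all_boot.
From Stdlib Require Import Relations.
Set Implicit Arguments. Unset Strict Implicit. Unset Printing Implicit Defensive.

(* Processes: a finite type P (unique identifiers = elements of P).
   A state is a set of directed links (p, q) meaning a link from p to q. *)
Definition state (P : finType) := {set P * P}.
Definition computation (P : finType) := nat -> state P.

(* Events: a local step of process p in state s_i, or an occurrence of
   the link (p, q) in state s_i (only meaningful when (p,q) \in s_i). *)
Inductive event (P : finType) :=
  | Local of P & nat
  | LinkEv of P & P & nat.
Arguments Local {P}.
Arguments LinkEv {P}.

Inductive cp_step (P : finType) (sigma : computation P) : event P -> event P -> Prop :=
  | cp_local p i j : i < j -> cp_step sigma (Local p i) (Local p j)
  | cp_into_link p1 p2 j k : (p1, p2) \in sigma k -> j <= k ->
      cp_step sigma (Local p1 j) (LinkEv p1 p2 k)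
  | cp_from_link p1 p2 k l : (p1, p2) \in sigma k -> k < l ->
      cp_step sigma (LinkEv p1 p2 k) (Local p2 l).

Definition causally_precedes (P : finType) (sigma : computation P) :
  event P -> event P -> Prop := clos_trans _ (cp_step sigma).

Definition LG (P : finType) (p : P) (sigma : computation P) (i : nat) : P -> P -> Prop :=
  fun a b => exists k, (a, b) \in sigma k /\
                       causally_precedes sigma (LinkEv a b k) (Local p i).

Definition is_knot (P : finType) (E : P -> P -> Prop) (K : {set P}) : Prop :=
  1 < #|K| /\
  (forall x y, x \in K -> y \in K ->
     clos_refl_trans _ (fun a b => [/\ a \in K, b \in K & E a b]) x y) /\
  (forall x y, E x y -> y \in K -> x \in K).

Definition observes (P : finType) (p : P) (sigma : computation P) (K : {set P}) : Prop :=
  exists i, is_knot (LG p sigma i) K.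

Definition globally_observable (P : finType) (sigma : computation P) (K : {set P}) : Prop :=
  forall p, observes p sigma K.

(* The outputs of an algorithm on sigma: out p = Some K if p outputs K,
   None if p outputs nothing.  The standing convention, KI Agreement and
   KI Termination. *)
Definition outputs_only_observed (P : finType) (sigma : computation P)
  (out : P -> option {set P}) : Prop :=
  forall p K, out p = Some K -> observes p sigma K.

Definition solves_KI (P : finType) (sigma : computation P)
  (out : P -> option {set P}) : Prop :=
  (forall p K, out p = Some K -> forall q, out q = Some K) /\
  (forall p, exists K, out p = Some K /\ exists q, observes q sigma K).

From mathcomp Require Import all_boot.

Theorem proposition2 (P : finType) (sigma : computation P)
  (out : P -> option {set P}) :
  outputs_only_observed sigma out ->
  solves_KI sigma out ->
  forall p K, out p = Some K -> globally_observable sigma K.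
Proof.
move=> observed_only [agreement _] p K outpK q.
have outqK : out q = Some K by exact: agreement outpK q.
exact: observed_only outqK.
Qed.
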